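(* The $5 \times 5$ knight's framework in $\mathbb{R}^2$ is infinitesimally rigid.
   Context: A framework in $\mathbb{R}^d$ is a finite graph whose vertices (called joints) are distinct points of $\mathbb{R}^d$ and whose edges (called bars) are line segments between pairs of joints. An infinitesimal motion of $\mathbb{R}^d$ is a map $f:\mathbb{R}^d\to\mathbb{R}^d$ with $(f(x)-f(y))\cdot(x-y)=0$ for all $x,y\in\mathbb{R}^d$. If $F$ is a framework with joint set $X$, an infinitesimal motion of $F$ is a map $g:X\to\mathbb{R}^d$ with $(g(x)-g(y))\cdot(x-y)=0$ for every bar $xy$ of $F$. $F$ is infinitesimally rigid if every infinitesimal motion of $F$ is the restriction to $X$ of some infinitesimal motion of $\mathbb{R}^d$. The $m\times n$ knight's framework in $\mathbb{R}^2$ has a joint at every integer point $(x,y)$ with $0\le x\le m-1$, $0\le y\le n-1$, and a bar between $(x_1,y_1)$ and $(x_2,y_2)$ exactly when $|x_1-x_2|=1,|y_1-y_2|=2$ or $|x_1-x_2|=2,|y_1-y_2|=1$. *)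

From HB Require Import structures.
From mathcomp Require Import all_boot all_order all_algebra.
From mathcomp Require Import reals.
Set Implicit Arguments. Unset Strict Implicit. Unset Printing Implicit Defensive.
Import Order.TTheory GRing.Theory Num.Theory.
Local Open Scope ring_scope.

Definition dot (R : realType) (d : nat) (u v : 'rV[R]_d) : R :=
  \sum_(k < d) u ord0 k * v ord0 k.

Definition inf_motion_space (R : realType) (d : nat) (f : 'rV[R]_d -> 'rV[R]_d) : Prop :=
  forall x y : 'rV[R]_d, dot (f x - f y) (x - y) = 0.

Record framework (R : realType) (d : nat) := Framework {
  fw_joint : finType;
  fw_pos : fw_joint -> 'rV[R]_d;
  fw_bar : rel fw_joint;
  fw_pos_inj : injective fw_pos;
}.

Definition inf_motion (R : realType) (d : nat) (F : framework R d)
    (g : fw_joint F -> 'rV[R]_d) : Prop :=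
  forall x y : fw_joint F, @fw_bar R d F x y ->
    dot (g x - g y) (@fw_pos R d F x - @fw_pos R d F y) = 0.

Definition inf_rigid (R : realType) (d : nat) (F : framework R d) : Prop :=
  forall g : fw_joint F -> 'rV[R]_d, inf_motion g ->
    exists f : 'rV[R]_d -> 'rV[R]_d,
      inf_motion_space f /\ forall x : fw_joint F, g x = f (@fw_pos R d F x).

Definition nat_dist (a b : nat) : nat := (a - b + (b - a))%N.

Definition knight_bar (m n : nat) : rel ('I_m * 'I_n) :=
  fun u v =>
    ((nat_dist u.1 v.1 == 1%N) && (nat_dist u.2 v.2 == 2%N)) ||
    ((nat_dist u.1 v.1 == 2%N) && (nat_dist u.2 v.2 == 1%N)).

Definition knight_pos (R : realType) (m n : nat) (u : 'I_m * 'I_n) : 'rV[R]_2 :=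
  \row_(k < 2) (if k == ord0 then (u.1 : nat)%:R else (u.2 : nat)%:R).

Lemma knight_pos_inj (R : realType) (m n : nat) : injective (@knight_pos R m n).
Proof.
move=> [a b] [c e] /rowP H.
have H0 := H ord0; have H1 := H (lift ord0 ord0).
rewrite !mxE /= in H0 H1.
move/eqP: H0; rewrite eqr_nat => /eqP /val_inj ->.
move/eqP: H1; rewrite eqr_nat => /eqP /val_inj -> //.
Qed.

Definition knight_framework (R : realType) (m n : nat) : framework R 2 :=
  @Framework R 2 ('I_m * 'I_n)%type (@knight_pos R m n)
    (knight_bar (m:=m) (n:=n)) (@knight_pos_inj R m n).

From mathcomp Require Import all_boot all_order all_algebra.
From mathcomp Require Import reals.
From mathcomp Require Import ring lra.

(* Subtracting a rigid motion, an infinitesimal motion of the 5 x 5 knight's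
   framework may be taken to vanish at (2,2) and to be vertical at (2,0).
   Without the four bars joining (0,2), (2,1), (4,2) and (2,3), every other
   joint can be attached, one at a time, by two non-parallel bars to joints
   already placed, starting from (2,0), (2,2), (2,4).  A motion of this reduced
   framework is therefore determined by its three remaining velocity
   coordinates at (2,0) and (2,4), which three explicit integer flexes realise.
   No non-zero combination of these flexes preserves the lengths of the deleted
   bars to first order, so only rigid motions survive. *)

Set Implicit Arguments. Unset Strict Implicit. Unset Printing Implicit Defensive.
Import GRing.Theory.
Local Open Scope ring_scope.

Section InfinitesimalMotions.
Variables (R : realType) (d : nat).
Implicit Types u v w : 'rV[R]_d.

Lemma dotDl u v w : dot (u + v) w = dot u w + dot v w.
Proof. by rewrite /dot -big_split; apply: eq_bigr => k _; rewrite mxE mulrDl. Qed.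

Lemma dotZl (c : R) u w : dot (c *: u) w = c * dot u w.
Proof. by rewrite /dot mulr_sumr; apply: eq_bigr => k _; rewrite mxE mulrA. Qed.

Variable F : framework R d.
Implicit Types g h : fw_joint F -> 'rV[R]_d.

Lemma eq_inf_motion g h : g =1 h -> inf_motion g -> inf_motion h.
Proof. by move=> gh gM x y xy; rewrite -!gh gM. Qed.

Lemma inf_motionD g h : inf_motion g -> inf_motion h -> inf_motion (fun x => g x + h x).
Proof. by move=> gM hM x y xy; rewrite opprD addrACA dotDl gM ?hM ?addr0. Qed.

Lemma inf_motionZ (c : R) g : inf_motion g -> inf_motion (fun x => c *: g x).
Proof. by move=> gM x y xy; rewrite -scalerBr dotZl gM ?mulr0. Qed.

Lemma inf_motionB g h : inf_motion g -> inf_motion h -> inf_motion (fun x => g x - h x).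
Proof.
move=> gM hM; apply: eq_inf_motion (inf_motionD gM (inf_motionZ (-1) hM)) => x.
by rewrite scaleN1r.
Qed.

Lemma inf_motion_restrict (f : 'rV[R]_d -> 'rV[R]_d) :
  inf_motion_space f -> inf_motion (fun x => f (@fw_pos R d F x)).
Proof. by move=> fM x y _; apply: fM. Qed.

End InfinitesimalMotions.

Section PlaneVectors.
Variable R : realType.
Implicit Types (c t u v w : 'rV[R]_2) (r : R).

Lemma row2_eq u v : u 0 0 = v 0 0 -> u 0 ord_max = v 0 ord_max -> u = v.
Proof.
move=> e0 e1; apply/rowP => -[[|[|//]] k2].
- by rewrite (_ : Ordinal k2 = 0) //; apply: val_inj.
- by rewrite (_ : Ordinal k2 = ord_max) //; apply: val_inj.
Qed.

Lemma dot2 u v : dot u v = u 0 0 * v 0 0 + u 0 ord_max * v 0 ord_max.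
Proof.
rewrite /dot big_ord_recr big_ord1 /=.
by have -> : widen_ord (leqnSn 1) ord0 = 0 by apply: val_inj.
Qed.

Definition cross u v : R := u 0 0 * v 0 ord_max - u 0 ord_max * v 0 0.

Definition perp u : 'rV[R]_2 := \row_k (if k == 0 then - u 0 ord_max else u 0 0).

Definition rigid_motion t r c : 'rV[R]_2 -> 'rV[R]_2 := fun x => t + r *: perp (x - c).

Lemma rigid_motion_inf t r c : inf_motion_space (rigid_motion t r c).
Proof. by move=> x y; rewrite dot2 !mxE /=; ring. Qed.

Lemma dot_cross_eq0 w u v :
  cross u v != 0 -> dot w u = 0 -> dot w v = 0 -> w = 0.
Proof.
move=> nz wu wv; apply: row2_eq; rewrite mxE; apply: (mulIf nz); rewrite mul0r.
- have -> : w 0 0 * cross u v = v 0 ord_max * dot w u - u 0 ord_max * dot w v.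
    by rewrite !dot2 /cross; ring.
  by rewrite wu wv; ring.
- have -> : w 0 ord_max * cross u v = u 0 0 * dot w v - v 0 0 * dot w u.
    by rewrite !dot2 /cross; ring.
  by rewrite wu wv; ring.
Qed.

End PlaneVectors.

Section IntegerVectors.
Variable R : realType.
Implicit Types u v : int * int.

Definition rvec u : 'rV[R]_2 := \row_k (if k == 0 then u.1%:~R else u.2%:~R).

Definition idot u v : int := u.1 * v.1 + u.2 * v.2.
Definition icross u v : int := u.1 * v.2 - u.2 * v.1.

Lemma rvecB u v : rvec (u - v) = rvec u - rvec v.
Proof. by apply/rowP => k; rewrite !mxE; case: ifP; rewrite /= intrB. Qed.

Lemma dot_rvec u v : dot (rvec u) (rvec v) = (idot u v)%:~R.
Proof. by rewrite dot2 !mxE /= intrD !intrM. Qed.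

Lemma cross_rvec u v : cross (rvec u) (rvec v) = (icross u v)%:~R.
Proof. by rewrite /cross !mxE /= intrB !intrM. Qed.

End IntegerVectors.

Section ZeroExtension.
Variables (J : eqType) (P : J -> int * int) (E : rel J).

Fixpoint zero_extensible (S : seq J) (steps : seq (J * J * J)) : bool :=
  if steps is (v, a, b) :: steps' then
    [&& a \in S, b \in S, E v a, E v b & icross (P v - P a) (P v - P b) != 0]
    && zero_extensible (v :: S) steps'
  else true.

Variables (R : realType) (k : J -> 'rV[R]_2).
Hypothesis kE : forall x y, E x y -> dot (k x - k y) (rvec R (P x) - rvec R (P y)) = 0.

Lemma zero_extension v a b :
  E v a -> E v b -> icross (P v - P a) (P v - P b) != 0 ->
  k a = 0 -> k b = 0 -> k v = 0.
Proof.
move=> Eva Evb nz ka kb.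
apply: (dot_cross_eq0 (u := rvec R (P v - P a)) (v := rvec R (P v - P b))).
- by rewrite cross_rvec intr_eq0.
- by rewrite rvecB -[k v]subr0 -ka kE.
- by rewrite rvecB -[k v]subr0 -kb kE.
Qed.

Lemma zero_extensible_eq0 S steps :
  zero_extensible S steps -> {in S, forall x, k x = 0} ->
  {in S ++ [seq s.1.1 | s <- steps], forall x, k x = 0}.
Proof.
elim: steps S => [|[[v a b] steps] IH] S /=; first by rewrite cats0.
case/andP => /and5P[aS bS Eva Evb nz] ext k0.
have kv : k v = 0 by apply: (zero_extension Eva Evb nz); apply: k0.
have k0' : {in v :: S, forall x, k x = 0}.
  by move=> y; rewrite in_cons => /predU1P [-> //|]; apply: k0.
move=> x; rewrite mem_cat in_cons orbCA orbA -in_cons -mem_cat; exact: IH ext k0' x.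
Qed.

End ZeroExtension.

Definition grid_pt m n (u : 'I_m * 'I_n) : int * int := ((u.1 : nat)%:Z, (u.2 : nat)%:Z).

Lemma knight_pos_rvec (R : realType) m n (u : 'I_m * 'I_n) :
  knight_pos R u = rvec R (grid_pt u).
Proof. by apply/rowP => k; rewrite !mxE; case: ifP. Qed.

Section KnightFiveByFive.
Variable R : realType.

Notation joint := ('I_5 * 'I_5)%type.

Definition sq (i j : nat) : joint := (inZp i, inZp j).

Definition board : seq joint := [seq sq i j | i <- iota 0 5, j <- iota 0 5].

Lemma mem_board u : u \in board.
Proof.
have -> : u = sq u.1 u.2 by rewrite /sq !valZpK; case: u.
by apply: allpairs_f; rewrite mem_iota ltn_ord.
Qed.

Definition diamond : seq joint := [:: sq 0 2; sq 2 1; sq 4 2; sq 2 3].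

Definition reduced_bar : rel joint :=
  [rel u v | knight_bar u v && ~~ ((u \in diamond) && (v \in diamond))].

Definition knight_seeds : seq joint := [:: sq 2 2; sq 2 0; sq 2 4].

Definition knight_steps : seq (joint * joint * joint) :=
  [:: (sq 0 1, sq 2 0, sq 2 2); (sq 0 3, sq 2 2, sq 2 4); (sq 1 2, sq 2 0, sq 2 4);
      (sq 3 2, sq 2 0, sq 2 4); (sq 4 1, sq 2 0, sq 2 2); (sq 4 3, sq 2 2, sq 2 4);
      (sq 1 1, sq 0 3, sq 3 2); (sq 1 3, sq 0 1, sq 3 2); (sq 3 0, sq 1 1, sq 2 2);
      (sq 3 1, sq 1 2, sq 4 3); (sq 3 3, sq 1 2, sq 4 1); (sq 3 4, sq 1 3, sq 2 2);
      (sq 4 2, sq 3 0, sq 3 4); (sq 1 0, sq 2 2, sq 3 1); (sq 1 4, sq 2 2, sq 3 3);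
      (sq 2 1, sq 1 3, sq 3 3); (sq 2 3, sq 1 1, sq 3 1); (sq 4 0, sq 2 1, sq 3 2);
      (sq 4 4, sq 2 3, sq 3 2); (sq 0 0, sq 1 2, sq 2 1); (sq 0 2, sq 1 0, sq 1 4);
      (sq 0 4, sq 1 2, sq 2 3)].

Lemma knight_steps_extensible :
  zero_extensible (@grid_pt 5 5) reduced_bar knight_seeds knight_steps.
Proof. by vm_compute. Qed.

Lemma knight_steps_cover :
  all (mem (knight_seeds ++ [seq s.1.1 | s <- knight_steps])) board.
Proof. by vm_compute. Qed.

Definition reduced_knight : framework R 2 :=
  @Framework R 2 joint (@knight_pos R 5 5) reduced_bar (@knight_pos_inj R 5 5).

Lemma knight_motion_reduced g :
  inf_motion (F := knight_framework R 5 5) g -> inf_motion (F := reduced_knight) g.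
Proof. by move=> gM u v /andP[uv _]; apply: gM. Qed.

Lemma reduced_motion_eq0 k :
  inf_motion (F := reduced_knight) k -> {in knight_seeds, forall u, k u = 0} ->
  forall u, k u = 0.
Proof.
move=> kM k0 u.
have kE x y : reduced_bar x y -> dot (k x - k y) (rvec R (grid_pt x) - rvec R (grid_pt y)) = 0.
  by rewrite -!knight_pos_rvec; apply: kM.
apply: (zero_extensible_eq0 kE knight_steps_extensible k0).
exact: (allP knight_steps_cover u (mem_board u)).
Qed.

Definition elongation (phi : joint -> int * int) (u v : joint) : int :=
  idot (phi u - phi v) (grid_pt u - grid_pt v).

Lemma dot_elongation phi u v :
  dot (rvec R (phi u) - rvec R (phi v)) (knight_pos R u - knight_pos R v) =
  (elongation phi u v)%:~R.
Proof. by rewrite !knight_pos_rvec -!rvecB dot_rvec. Qed.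

Definition reduced_int_motion (phi : joint -> int * int) : bool :=
  all (fun u => all (fun v => reduced_bar u v ==> (elongation phi u v == 0)) board) board.

Lemma reduced_int_motionP phi :
  reduced_int_motion phi -> inf_motion (F := reduced_knight) (fun u => rvec R (phi u)).
Proof.
move=> /allP phiM u v uv; rewrite /= dot_elongation.
by have /allP/(_ v (mem_board v))/implyP/(_ uv)/eqP -> := phiM u (mem_board u).
Qed.

Definition flex_of (tab : seq (seq (int * int))) (u : joint) : int * int :=
  nth 0 (nth [::] tab u.1) u.2.

Definition flex1 : joint -> int * int := flex_of
  [:: [:: (-2, 1); (-2, 4); (-16, 0); (0, 0); (0, 8)];
      [:: (-8, 4); (8, 4); (-8, 4); (6, 0); (-8, -4)];
      [:: (0, 8); (0, -3); (0, 0); (0, 8); (0, 0)];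
      [:: (8, 4); (-8, 4); (8, 4); (-6, 0); (8, -4)];
      [:: (2, 1); (2, 4); (16, 0); (0, 0); (0, 8)]].

Definition flex2 : joint -> int * int := flex_of
  [:: [:: (4, 0); (0, 0); (0, 2); (2, 4); (8, 4)];
      [:: (-2, 1); (0, 3); (2, 1); (2, -1); (2, 1)];
      [:: (0, 0); (4, 0); (0, 0); (6, 0); (4, 0)];
      [:: (-2, -1); (0, -3); (2, -1); (2, 1); (2, -1)];
      [:: (4, 0); (0, 0); (0, -2); (2, -4); (8, -4)]].

Definition flex3 (u : joint) : int * int := flex1 (rev_ord u.1, rev_ord u.2).

Lemma flexes_reduced_int_motion :
  [&& reduced_int_motion flex1, reduced_int_motion flex2 & reduced_int_motion flex3].
Proof. by vm_compute. Qed.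

Definition flex_comb (c1 c2 c3 : R) (u : joint) : 'rV[R]_2 :=
  c1 *: rvec R (flex1 u) + c2 *: rvec R (flex2 u) + c3 *: rvec R (flex3 u).

Lemma flex_comb_motion c1 c2 c3 : inf_motion (F := reduced_knight) (flex_comb c1 c2 c3).
Proof.
have /and3P[/reduced_int_motionP m1 /reduced_int_motionP m2 /reduced_int_motionP m3] :=
  flexes_reduced_int_motion.
exact: inf_motionD (inf_motionD (inf_motionZ c1 m1) (inf_motionZ c2 m2)) (inf_motionZ c3 m3).
Qed.

Lemma reduced_motion_decomposition g :
  inf_motion (F := reduced_knight) g ->
  exists t r c1 c2 c3, forall u,
    g u = rigid_motion t r (knight_pos R (sq 2 2)) (knight_pos R u) + flex_comb c1 c2 c3 u.
Proof.
move=> gM.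
pose t := g (sq 2 2); pose d1 := g (sq 2 0) - t; pose d2 := g (sq 2 4) - t.
pose r := d1 0 0 / 2.
(* At the seeds the flexes vanish, except flex1 = (0,8) at (2,0) and
   flex2 = (4,0), flex3 = (0,8) at (2,4). *)
pose c1 := d1 0 ord_max / 8; pose c2 := (d2 0 0 + 2 * r) / 4; pose c3 := d2 0 ord_max / 8.
pose f u := rigid_motion t r (knight_pos R (sq 2 2)) (knight_pos R u) + flex_comb c1 c2 c3 u.
suff fg u : g u - f u = 0 by exists t, r, c1, c2, c3 => u; apply/subr0_eq/fg.
move: u; apply: reduced_motion_eq0.
  apply: inf_motionB gM (inf_motionD (inf_motion_restrict _) (flex_comb_motion _ _ _)).
  exact: rigid_motion_inf.
have [p0 p1 p2] : [/\ grid_pt (sq 2 2) = (2, 2), grid_pt (sq 2 0) = (2, 0)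
                    & grid_pt (sq 2 4) = (2, 4)] by [].
move=> u; rewrite !inE => /or3P[] /eqP ->; apply: row2_eq;
  rewrite /f /flex_comb /rigid_motion /perp !knight_pos_rvec ?p0 ?p1 ?p2 !mxE /=
    /c1 /c2 /c3 /r /d1 /d2 /t !mxE; by field.
Qed.

Definition flex_elongations (u v : joint) : int * int * int :=
  (elongation flex1 u v, elongation flex2 u v, elongation flex3 u v).

Lemma dot_flex_comb c1 c2 c3 u v :
  dot (flex_comb c1 c2 c3 u - flex_comb c1 c2 c3 v) (knight_pos R u - knight_pos R v) =
  let: (e1, e2, e3) := flex_elongations u v in c1 * e1%:~R + c2 * e2%:~R + c3 * e3%:~R.
Proof. by rewrite /= -!dot_elongation !dot2 !mxE; ring. Qed.

Lemma diamond_elongations :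
  [/\ flex_elongations (sq 0 2) (sq 2 1) = (35, 10, -40),
      flex_elongations (sq 0 2) (sq 2 3) = (40, 10, -35)
    & flex_elongations (sq 2 1) (sq 4 2) = (35, -10, -40)].
Proof. by []. Qed.

Lemma flex_comb_eq0 c1 c2 c3 :
  inf_motion (F := knight_framework R 5 5) (flex_comb c1 c2 c3) -> [/\ c1 = 0, c2 = 0 & c3 = 0].
Proof.
move=> cM; have [s1 s2 s3] := diamond_elongations.
have := cM (sq 0 2) (sq 2 1) isT; have := cM (sq 0 2) (sq 2 3) isT.
have := cM (sq 2 1) (sq 4 2) isT.
rewrite /= !dot_flex_comb s1 s2 s3 => e3 e2 e1.
split; lra.
Qed.

End KnightFiveByFive.

Theorem theorem2 (R : realType) : inf_rigid (knight_framework R 5 5).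
Proof.
move=> g gM.
have [t [r [c1 [c2 [c3 gE]]]]] := reduced_motion_decomposition (knight_motion_reduced gM).
pose tau := rigid_motion t r (knight_pos R (sq 2 2)).
have tauM : inf_motion_space tau by exact: rigid_motion_inf.
have : inf_motion (F := knight_framework R 5 5) (flex_comb c1 c2 c3).
  apply: eq_inf_motion (inf_motionB gM (inf_motion_restrict tauM)) => u.
  by rewrite gE addrC addKr.
case/flex_comb_eq0 => c10 c20 c30.
exists tau; split => // u.
by rewrite gE c10 c20 c30 /flex_comb !scale0r !addr0.
Qed.
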